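(* Let $\mathfrak p=(p_i)_{i\in\mathbb N}$ be a probability distribution supported by $\mathbb N$ and let $D\subseteq\mathbb N$ be nonempty (finite or infinite). If $d\ge 0$ satisfies $\sum_{i\in D}p_i^{d}=1$, then $\dim_H \pi_{\mathfrak p}(D^{\mathbb N})=d$.
   Context: $\mathbb N=\{1,2,3,\dots\}$. A probability distribution $\mathfrak p=(p_i)_{i\in\mathbb N}$ is supported by $\mathbb N$ if $p_i\in(0,1)$ for all $i$ and $\sum_{i=1}^\infty p_i=1$. Set $\widehat{p_1}=0$ and $\widehat{p_n}=\sum_{i=1}^{n-1}p_i$ for $n\ge 2$. For $n\in\mathbb N$ let $T_n:[0,1)\to[0,1)$, $T_n x=p_n x+\widehat{p_n}$. Define $\pi_{\mathfrak p}:\mathbb N^{\mathbb N}\to[0,1)$ by $\pi_{\mathfrak p}((n_j))=\lim_{j\to\infty}T_{n_1}\circ\cdots\circ T_{n_j}(0)=\widehat{p_{n_1}}+\sum_{j=1}^\infty p_{n_1}\cdots p_{n_j}\widehat{p_{n_{j+1}}}$; this is a bijection onto $[0,1)$, and for $x\in[0,1)$ the entries of $\pi_{\mathfrak p}^{-1}(x)$ are called the digits of $x$ with respect to $\mathfrak p$. $\dim_H$ denotes Hausdorff dimension. *)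

From Stdlib Require Import Reals Lra ClassicalEpsilon.
Open Scope R_scope.

(** Digits are 0-based: index i : nat stands for the paper's i+1. *)

Fixpoint phat (p : nat -> R) (n : nat) : R :=
  match n with O => 0 | S m => phat p m + p m end.

Definition Tmap (p : nat -> R) (n : nat) (x : R) : R := p n * x + phat p n.

Fixpoint comp (p : nat -> R) (j : nat) (w : nat -> nat) (x : R) : R :=
  match j with
  | O => x
  | S j' => Tmap p (w O) (comp p j' (fun k => w (S k)) x)
  end.

Definition is_pi (p : nat -> R) (w : nat -> nat) (x : R) : Prop :=
  Un_cv (fun j => comp p j w 0) x.

Definition pi_image (p : nat -> R) (D : nat -> Prop) : R -> Prop :=
  fun x => exists w : nat -> nat, (forall k, D (w k)) /\ is_pi p w x.

Definition rpow (r s : R) : R :=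
  if Req_EM_T r 0 then (if Req_EM_T s 0 then 1 else 0) else Rpower r s.

Definition is_diam (U : R -> Prop) (r : R) : Prop :=
  is_lub (fun t => exists x y, U x /\ U y /\ t = Rabs (x - y)) r.

Definition delta_cover (delta : R) (E : R -> Prop)
  (U : nat -> R -> Prop) (r : nat -> R) : Prop :=
  (forall x, E x -> exists n, U n x) /\
  (forall n, (exists x, U n x) -> is_diam (U n) (r n) /\ r n <= delta).

Definition cover_term (s : R) (U : nat -> R -> Prop) (r : nat -> R) (n : nat) : R :=
  match excluded_middle_informative (exists x, U n x) with
  | left _ => rpow (r n) s
  | right _ => 0
  end.

(** H^s(E) = 0, i.e. H^s_delta(E) = inf over delta-covers of sum |U_n|^s
    is 0 for every delta > 0 (H^s = sup_delta H^s_delta). *)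
Definition hausdorff_null (s : R) (E : R -> Prop) : Prop :=
  forall delta eps, 0 < delta -> 0 < eps ->
    exists U r l, delta_cover delta E U r /\
      infinite_sum (cover_term s U r) l /\ l <= eps.

Definition hausdorff_dim_is (E : R -> Prop) (d : R) : Prop :=
  (forall s, 0 <= s -> hausdorff_null s E -> d <= s) /\
  (forall b, (forall s, 0 <= s -> hausdorff_null s E -> b <= s) -> b <= d).

Definition restr_pow (p : nat -> R) (D : nat -> Prop) (d : R) (i : nat) : R :=
  match excluded_middle_informative (D i) with
  | left _ => Rpower (p i) d
  | right _ => 0
  end.

(** Write E = pi_p(D^N).  The coding map is self-similar: pi_p(w) = T_(w0)
    (pi_p(shifted w)), each T_i being a similitude of ratio p_i, and all p_i
    are bounded by a common lam < 1.

    Upper bound (H^s(E) = 0 for s > d).  For a cut-off N, the points of E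
    with first digit >= N lie in [phat_N, 1); the others lie in T_i(E) with
    i in D, i < N.  Iterating L times gives a finite cover whose pieces have
    diameter <= max(1 - phat_N, lam^L) and whose s-cost C_L satisfies
    C_(L+1) = (1 - phat_N)^s + F C_L with F <= lam^(s-d) < 1.

    Lower bound (H^s(E) > 0 for 0 <= s < d).  For s > 0 pick finitely many
    digits M of D with sum_(m in M) p_m^s >= 1.  The set E_M = pi_p(M^N) is
    invariant under the T_m and the T_m(E_M) are g-separated, so a mass
    counting induction shows that every finite interval cover of E_M costs
    at least g^s; a Koenig argument reduces countable covers to finite
    ones.  For s = 0 it suffices that E is nonempty. *)

From Pilot Require Import Defs.
From Stdlib Require Import Reals.
From Stdlib Require Import Lra Lia List ClassicalEpsilon Classical.
(* Re-import Defs so that its [comp] shadows Stdlib's function composition. *)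
Import Defs ListNotations.
Open Scope R_scope.

Fixpoint lsum {A : Type} (f : A -> R) (l : list A) : R :=
  match l with [] => 0 | a :: l' => f a + lsum f l' end.

Lemma lsum_nonneg {A} (f : A -> R) l :
  (forall a, In a l -> 0 <= f a) -> 0 <= lsum f l.
Proof.
  induction l as [|a l IH]; simpl; intros H; [lra|].
  pose proof (H a (or_introl eq_refl)). assert (0 <= lsum f l) by auto. lra.
Qed.

Lemma lsum_In_le {A} (f : A -> R) l a :
  (forall b, In b l -> 0 <= f b) -> In a l -> f a <= lsum f l.
Proof.
  induction l as [|b l IH]; simpl; intros H Ha; [contradiction|].
  pose proof (H b (or_introl eq_refl)).
  destruct Ha as [<-|Ha].
  - assert (0 <= lsum f l) by (apply lsum_nonneg; auto). lra.
  - assert (f a <= lsum f l) by (apply IH; auto). lra.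
Qed.

Lemma lsum_le {A} (f g : A -> R) l :
  (forall a, In a l -> f a <= g a) -> lsum f l <= lsum g l.
Proof.
  induction l as [|a l IH]; simpl; intros H; [lra|].
  pose proof (H a (or_introl eq_refl)). assert (lsum f l <= lsum g l) by auto. lra.
Qed.

Lemma lsum_ext {A} (f g : A -> R) l :
  (forall a, In a l -> f a = g a) -> lsum f l = lsum g l.
Proof.
  induction l as [|a l IH]; simpl; intros H; [lra|].
  rewrite H, IH by auto. lra.
Qed.

Lemma lsum_zero {A} (f : A -> R) l : (forall a, In a l -> f a = 0) -> lsum f l = 0.
Proof.
  induction l as [|a l IH]; simpl; intros H; [lra|]. rewrite H, IH by auto. lra.
Qed.

Lemma lsum_app {A} (f : A -> R) l1 l2 : lsum f (l1 ++ l2) = lsum f l1 + lsum f l2.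
Proof. induction l1; simpl; lra. Qed.

Lemma lsum_map {A B} (f : B -> R) (g : A -> B) l :
  lsum f (map g l) = lsum (fun a => f (g a)) l.
Proof. induction l; simpl; congruence. Qed.

Lemma lsum_scal {A} (f : A -> R) c l : lsum (fun a => c * f a) l = c * lsum f l.
Proof. induction l; simpl; [|rewrite IHl]; lra. Qed.

Lemma lsum_plus {A} (f g : A -> R) l :
  lsum (fun a => f a + g a) l = lsum f l + lsum g l.
Proof. induction l; simpl; [|rewrite IHl]; lra. Qed.

Lemma lsum_flat_map {A B} (f : B -> R) (g : A -> list B) l :
  lsum f (flat_map g l) = lsum (fun a => lsum f (g a)) l.
Proof. induction l; simpl; [|rewrite lsum_app, IHl]; lra. Qed.

Lemma lsum_exchange {A B} (f : A -> B -> R) la lb :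
  lsum (fun a => lsum (fun b => f a b) lb) la =
  lsum (fun b => lsum (fun a => f a b) la) lb.
Proof.
  induction la; simpl.
  - induction lb; simpl; lra.
  - rewrite IHla, <- lsum_plus. reflexivity.
Qed.

Lemma lsum_seq (f : nat -> R) n : lsum f (seq 0 (S n)) = sum_f_R0 f n.
Proof. induction n; [simpl; lra|]. rewrite seq_S, lsum_app, IHn. simpl. lra. Qed.

Lemma lsum_geom_half K : lsum (fun n => / 2 ^ (S n)) (seq 0 K) = 1 - / 2 ^ K.
Proof.
  induction K; [simpl; field|].
  rewrite seq_S, lsum_app, IHK. simpl.
  assert (0 < 2 ^ K) by (apply pow_lt; lra). field. lra.
Qed.

Definition dec (P : Prop) : bool := if excluded_middle_informative P then true else false.
Definition ind (P : Prop) : R := if excluded_middle_informative P then 1 else 0.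
Arguments dec : simpl never.
Arguments ind : simpl never.

Lemma dec_true (P : Prop) : dec P = true <-> P.
Proof. unfold dec; destruct excluded_middle_informative; split; intros; try tauto; discriminate. Qed.

Lemma lsum_filter {A} (f : A -> R) (P : A -> Prop) l :
  lsum f (filter (fun a => dec (P a)) l) = lsum (fun a => ind (P a) * f a) l.
Proof.
  induction l as [|a l IH]; simpl; [lra|].
  unfold ind at 1, dec at 1. destruct excluded_middle_informative; simpl; rewrite IH; lra.
Qed.

Lemma count_unique_le1 {A} (P : A -> Prop) l : NoDup l ->
  (forall a b, In a l -> In b l -> P a -> P b -> a = b) ->
  lsum (fun a => ind (P a)) l <= 1.
Proof.
  induction l as [|a l IH]; intros Hnd Hu; simpl; [lra|]. inversion Hnd; subst.
  unfold ind at 1. destruct excluded_middle_informative as [h|h].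
  - rewrite lsum_zero; [lra|]. intros b Hb. unfold ind.
    destruct excluded_middle_informative as [h'|h']; auto.
    assert (b = a) by (apply Hu; simpl; auto). subst; contradiction.
  - assert (lsum (fun a => ind (P a)) l <= 1)
      by (apply IH; auto; intros; apply Hu; simpl; auto). lra.
Qed.

Lemma fin_min_pos {A} (l : list A) (f : A -> R) : (forall n, In n l -> 0 < f n) ->
  exists c, 0 < c /\ forall n, In n l -> c <= f n.
Proof.
  induction l as [|a l IH]; intros H.
  - exists 1. split; [lra|]. intros n [].
  - destruct IH as [c [Hc Hc']]. { intros; apply H; simpl; auto. }
    exists (Rmin c (f a)). split. { apply Rmin_glb_lt; auto. apply H; simpl; auto. }
    intros n [<-|Hn]. { apply Rmin_r. } eapply Rle_trans; [apply Rmin_l|auto].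
Qed.

Lemma sum_f_R0_ge_term (f : nat -> R) i N :
  (forall k, 0 <= f k) -> (i <= N)%nat -> f i <= sum_f_R0 f N.
Proof.
  intros Hf Hi. induction Hi; simpl.
  - destruct i; simpl; [lra|]. pose proof (Hf (S i)).
    assert (0 <= sum_f_R0 f i) by (apply cond_pos_sum; auto). lra.
  - pose proof (Hf (S m)). lra.
Qed.

Lemma cv_affine (u : nat -> R) x a b :
  Un_cv u x -> Un_cv (fun j => a * u j + b) (a * x + b).
Proof. intros H. apply (continuity_seq (fun y => a * y + b)); [reg|exact H]. Qed.

Lemma cv_le_bound (u : nat -> R) x b : Un_cv u x -> (forall j, u j <= b) -> x <= b.
Proof.
  intros H Hb. apply (Rle_cv_lim Hb H).
  intros e He. exists 0%nat. intros. unfold Rdist. rewrite Rminus_diag, Rabs_R0. lra.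
Qed.

Lemma Rpower_pos x y : 0 < Rpower x y.
Proof. apply exp_pos. Qed.

Lemma Rpower_lt_exp x a b : 0 < x < 1 -> a < b -> Rpower x b < Rpower x a.
Proof.
  intros Hx Hab. unfold Rpower. apply exp_increasing.
  assert (ln x < 0) by (rewrite <- ln_1; apply ln_increasing; lra). nra.
Qed.

(** The convention 0^s = 0 (s > 0) of [rpow] keeps it below any positive
    bound of the base. *)
Lemma rpow_le_Rpower r b s : 0 < s -> 0 <= r <= b -> 0 < b -> rpow r s <= Rpower b s.
Proof.
  intros Hs Hr Hb. unfold rpow. destruct (Req_EM_T r 0).
  - destruct (Req_EM_T s 0); [lra|]. left; apply Rpower_pos.
  - apply Rle_Rpower_l; lra.
Qed.

Lemma rpow_nonneg r s : 0 <= rpow r s.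
Proof.
  unfold rpow. destruct Req_EM_T; [destruct Req_EM_T; lra|left; apply Rpower_pos].
Qed.

Lemma Rpower_max_le a b s : 0 < s -> 0 <= a -> 0 < b ->
  Rpower (Rmax a b) s <= rpow a s + Rpower b s.
Proof.
  intros Hs Ha Hb. pose proof (rpow_nonneg a s). unfold Rmax. destruct (Rle_dec a b); [lra|].
  unfold rpow. destruct Req_EM_T; [lra|]. pose proof (Rpower_pos b s). lra.
Qed.

(** * The coding map pi_p *)

Section Coding.
Variable p : nat -> R.
Hypothesis p_range : forall i, 0 < p i < 1.
Hypothesis p_sum : infinite_sum p 1.

Lemma p_nonneg i : 0 <= p i.
Proof. pose proof (p_range i); lra. Qed.

Lemma phat_sum n : phat p (S n) = sum_f_R0 p n.
Proof. induction n; simpl in *; [lra|]. rewrite IHn. reflexivity. Qed.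

Lemma phat_nonneg n : 0 <= phat p n.
Proof. induction n; simpl; [lra|]. pose proof (p_range n); lra. Qed.

Lemma phat_mono m n : (m <= n)%nat -> phat p m <= phat p n.
Proof. intros H; induction H; simpl; [lra|]. pose proof (p_range m0); lra. Qed.

Lemma phat_lt1 n : phat p n < 1.
Proof.
  assert (phat p (S n) <= 1)
    by (rewrite phat_sum; apply (sum_incr p n 1 p_sum p_nonneg)).
  simpl in *. pose proof (p_range n); lra.
Qed.

Lemma phat_to1 e : 0 < e -> exists N, 1 - phat p N < e.
Proof.
  intros He. destruct (p_sum e He) as [N HN]. exists (S N).
  rewrite phat_sum. specialize (HN N (le_n _)). unfold Rdist in HN.
  apply Rabs_def2 in HN. lra.
Qed.

(** All the ratios p_i are bounded by a common lam < 1: indeed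
    p_i <= 1 - p_0 for i > 0. *)
Lemma p_uniform_bound : exists lam, 0 < lam < 1 /\ forall i, p i <= lam.
Proof.
  pose proof (p_range 0). exists (Rmax (p 0%nat) (1 - p 0%nat)). split.
  { split; [eapply Rlt_le_trans; [|apply Rmax_l]; lra|apply Rmax_lub_lt; lra]. }
  intros [|i]; [apply Rmax_l|]. eapply Rle_trans; [|apply Rmax_r].
  assert (sum_f_R0 p (S i) <= 1) by (apply (sum_incr p _ 1 p_sum p_nonneg)).
  assert (p 0%nat <= sum_f_R0 p i) by (apply sum_f_R0_ge_term; [apply p_nonneg|lia]).
  simpl in *. lra.
Qed.

Lemma Tmap_range n x : 0 <= x <= 1 -> phat p n <= Tmap p n x <= phat p (S n).
Proof. intros Hx. unfold Tmap; simpl. pose proof (p_range n). nra. Qed.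

Lemma Tmap_dist n x y : Rabs (Tmap p n x - Tmap p n y) = p n * Rabs (x - y).
Proof.
  unfold Tmap. replace (p n * x + phat p n - (p n * y + phat p n)) with (p n * (x - y)) by ring.
  rewrite Rabs_mult, Rabs_right; [reflexivity|]. left; apply p_range.
Qed.

Lemma comp_range j w : 0 <= comp p j w 0 <= 1.
Proof.
  revert w; induction j as [|j IH]; intros w; simpl; [lra|].
  pose proof (Tmap_range (w 0%nat) _ (IH (fun k => w (S k)))).
  pose proof (phat_nonneg (w 0%nat)). pose proof (phat_lt1 (S (w 0%nat))). lra.
Qed.

Lemma comp_le_hat j w : comp p j w 0 <= phat p (S (w 0%nat)).
Proof.
  destruct j; simpl.
  - pose proof (phat_nonneg (w 0%nat)). pose proof (p_range (w 0%nat)). lra.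
  - pose proof (Tmap_range (w 0%nat) _ (comp_range j (fun k => w (S k)))). simpl in *. lra.
Qed.

Lemma comp_growing w : Un_growing (fun j => comp p j w 0).
Proof.
  intros j. revert w; induction j as [|j IH]; intros w.
  - simpl. unfold Tmap. pose proof (phat_nonneg (w 0%nat)). lra.
  - change (Tmap p (w 0%nat) (comp p j (fun k => w (S k)) 0) <=
            Tmap p (w 0%nat) (comp p (S j) (fun k => w (S k)) 0)).
    unfold Tmap. pose proof (p_range (w 0%nat)). specialize (IH (fun k => w (S k))). nra.
Qed.

Lemma pi_exists w : exists x, is_pi p w x.
Proof.
  destruct (growing_cv _ (comp_growing w)) as [x Hx]; [|exists x; exact Hx].
  exists 1. intros y [n ->]. apply comp_range.
Qed.

Lemma pi_range w x : is_pi p w x -> 0 <= x <= phat p (S (w 0%nat)).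
Proof.
  intros H. split.
  - pose proof (growing_ineq _ _ (comp_growing w) H 0%nat). simpl in *. lra.
  - apply (cv_le_bound _ _ _ H). intros j. apply comp_le_hat.
Qed.

Lemma pi_range1 w x : is_pi p w x -> 0 <= x < 1.
Proof.
  intros H. pose proof (pi_range w x H). pose proof (phat_lt1 (S (w 0%nat))). lra.
Qed.

Definition cons_seq (m : nat) (w : nat -> nat) : nat -> nat :=
  fun k => match k with O => m | S k' => w k' end.

Lemma pi_cons m w x : is_pi p w x -> is_pi p (cons_seq m w) (Tmap p m x).
Proof.
  intros H eps He. destruct (cv_affine _ _ (p m) (phat p m) H eps He) as [N HN].
  exists (S N). intros [|n] Hn; [lia|]. apply HN. lia.
Qed.

Lemma comp_ext j w w' x : (forall k, w k = w' k) -> comp p j w x = comp p j w' x.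
Proof.
  revert w w'; induction j as [|j IH]; intros w w' H; simpl; [reflexivity|].
  rewrite H. f_equal. apply IH. intros; apply H.
Qed.

Lemma pi_decomp w x : is_pi p w x ->
  exists y, is_pi p (fun k => w (S k)) y /\ x = Tmap p (w 0%nat) y.
Proof.
  intros H. destruct (pi_exists (fun k => w (S k))) as [y Hy].
  exists y. split; [exact Hy|].
  pose proof (pi_cons (w 0%nat) _ _ Hy) as Hc.
  apply (UL_sequence _ _ _ H). intros e He. destruct (Hc e He) as [N HN].
  exists N. intros n Hn. rewrite <- (comp_ext n (cons_seq (w 0%nat) (fun k => w (S k)))).
  - apply HN; auto.
  - intros [|k]; reflexivity.
Qed.

Lemma pi_close (ms : list nat) lam : 0 < lam -> (forall m, In m ms -> p m <= lam) ->
  forall k w w' x x', (forall i, In (w i) ms) -> (forall i, (i < k)%nat -> w i = w' i) ->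
  is_pi p w x -> is_pi p w' x' -> Rabs (x - x') <= lam ^ k.
Proof.
  intros Hl Hpm. induction k as [|k IH]; intros w w' x x' Hw Hag Hx Hx'.
  - apply pi_range1 in Hx. apply pi_range1 in Hx'. simpl. apply Rabs_le. lra.
  - destruct (pi_decomp w x Hx) as [y [Hy ->]].
    destruct (pi_decomp w' x' Hx') as [y' [Hy' ->]].
    rewrite <- (Hag 0%nat), Tmap_dist by lia.
    assert (Rabs (y - y') <= lam ^ k).
    { apply (IH (fun i => w (S i)) (fun i => w' (S i))); auto. intros i Hi; apply Hag; lia. }
    pose proof (Hpm _ (Hw 0%nat)). pose proof (p_nonneg (w 0%nat)).
    pose proof (Rabs_pos (y - y')). simpl. nra.
Qed.

End Coding.

(** * From finite families of bounded sets to delta-covers *)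

Lemma infinite_sum_finite (f : nat -> R) K :
  (forall n, (K < n)%nat -> f n = 0) -> infinite_sum f (sum_f_R0 f K).
Proof.
  intros H e He. exists K. intros n Hn. unfold Rdist.
  replace (sum_f_R0 f n) with (sum_f_R0 f K); [rewrite Rminus_diag, Rabs_R0; lra|].
  induction Hn; simpl; [reflexivity|]. rewrite <- IHHn, H by lia. lra.
Qed.

Definition nthv {T} (h : T -> R) (cl : list T) (n : nat) : R :=
  match nth_error cl n with Some ab => h ab | None => 0 end.

Lemma sum_nthv {T} (h : T -> R) cl K :
  (length cl <= K)%nat -> sum_f_R0 (nthv h cl) K = lsum h cl.
Proof.
  revert K; induction cl as [|a cl IH]; intros K HK; simpl.
  - apply sum_eq_R0. intros [|n] _; reflexivity.
  - simpl in HK. rewrite decomp_sum by lia. unfold nthv at 1; simpl.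
    rewrite <- (IH (pred K)) by lia. reflexivity.
Qed.

Definition dist_set (U : R -> Prop) : R -> Prop :=
  fun t => exists x y, U x /\ U y /\ t = Rabs (x - y).

Definition diam_of (U : R -> Prop) : R :=
  match excluded_middle_informative (exists m, is_lub (dist_set U) m) with
  | left h => proj1_sig (constructive_indefinite_description _ h)
  | right _ => 0
  end.

Lemma diam_of_spec (U : R -> Prop) b : (exists x, U x) ->
  (forall x y, U x -> U y -> Rabs (x - y) <= b) ->
  is_diam U (diam_of U) /\ 0 <= diam_of U <= b.
Proof.
  intros [x0 Hx0] Hb.
  assert (H0 : dist_set U 0).
  { exists x0, x0. rewrite Rminus_diag, Rabs_R0. auto. }
  assert (Hub : is_upper_bound (dist_set U) b) by (intros t (x & y & Hx & Hy & ->); auto).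
  assert (Hex : exists m, is_lub (dist_set U) m).
  { destruct (completeness (dist_set U)) as [m Hm]; [exists b; exact Hub|exists 0; exact H0|].
    exists m; exact Hm. }
  unfold diam_of. destruct excluded_middle_informative as [h|h]; [|tauto].
  destruct (constructive_indefinite_description _ h) as [m Hm]; simpl.
  split; [exact Hm|]. split; [apply Hm, H0|apply Hm, Hub].
Qed.

Lemma cover_term_nonneg s U r n : 0 <= cover_term s U r n.
Proof. unfold cover_term. destruct excluded_middle_informative; [apply rpow_nonneg|lra]. Qed.

Lemma finite_family_cover (E : R -> Prop) (cl : list ((R -> Prop) * R)) s delta eps :
  0 < s ->
  (forall x, E x -> exists ab, In ab cl /\ fst ab x) ->
  (forall ab, In ab cl -> 0 < snd ab <= delta /\
     forall x y, fst ab x -> fst ab y -> Rabs (x - y) <= snd ab) ->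
  lsum (fun ab => Rpower (snd ab) s) cl <= eps ->
  exists U r l, delta_cover delta E U r /\ infinite_sum (cover_term s U r) l /\ l <= eps.
Proof.
  intros Hs Hcov Hab Hsum.
  set (U := fun n x => match nth_error cl n with Some ab => fst ab x | None => False end).
  set (r := fun n => diam_of (U n)).
  assert (Hdiam : forall n ab, nth_error cl n = Some ab -> (exists x, U n x) ->
            is_diam (U n) (r n) /\ 0 <= r n <= snd ab /\ 0 < snd ab <= delta).
  { intros n ab Hn Hne. destruct (Hab ab (nth_error_In _ _ Hn)) as [Hb Hd].
    assert (Hd' : forall x y, U n x -> U n y -> Rabs (x - y) <= snd ab)
      by (unfold U; rewrite Hn; auto).
    destruct (diam_of_spec (U n) (snd ab) Hne Hd'). auto. }
  assert (Hempty : forall n, nth_error cl n = None -> ~ exists x, U n x)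
    by (intros n Hn [x Hx]; unfold U in Hx; rewrite Hn in Hx; exact Hx).
  exists U, r, (sum_f_R0 (cover_term s U r) (length cl)). split; [split|split].
  - intros x Hx. destruct (Hcov x Hx) as [ab [Hin Hx']].
    destruct (In_nth_error _ _ Hin) as [n Hn]. exists n. unfold U; rewrite Hn; auto.
  - intros n Hne. destruct (nth_error cl n) as [ab|] eqn:Hn; [|exfalso; exact (Hempty n Hn Hne)].
    destruct (Hdiam n ab Hn Hne) as (Hd & Hr & Hb). split; [exact Hd|lra].
  - apply infinite_sum_finite. intros n Hn. unfold cover_term.
    destruct excluded_middle_informative as [h|h]; [|reflexivity].
    exfalso. apply (Hempty n); [apply nth_error_None; lia|exact h].
  - eapply Rle_trans; [|exact Hsum]. rewrite <- (sum_nthv _ cl (length cl)) by lia.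
    apply sum_growing. intros n. unfold cover_term, nthv.
    destruct excluded_middle_informative as [h|h].
    + destruct (nth_error cl n) as [ab|] eqn:Hn; [|exfalso; exact (Hempty n Hn h)].
      destruct (Hdiam n ab Hn h) as (_ & Hr & Hb). apply rpow_le_Rpower; lra.
    + destruct (nth_error cl n); [left; apply Rpower_pos|lra].
Qed.

(** * Upper bound: H^s(pi_p(D^N)) = 0 for s > d *)

Section UpperBound.
Variable p : nat -> R.
Variable D : nat -> Prop.
Hypothesis p_range : forall i, 0 < p i < 1.
Hypothesis p_sum : infinite_sum p 1.

Definition Fset (N : nat) : list nat := filter (fun i => dec (D i)) (seq 0 N).

Lemma Fset_In N i : In i (Fset N) <-> D i /\ (i < N)%nat.
Proof. unfold Fset. rewrite filter_In, in_seq, dec_true. split; intros [h1 h2]; split; auto; lia. Qed.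

Lemma Fset_lsum s N : lsum (fun i => Rpower (p i) s) (Fset (S N)) = sum_f_R0 (restr_pow p D s) N.
Proof.
  unfold Fset. rewrite lsum_filter, <- lsum_seq. apply lsum_ext.
  intros a _. unfold ind, restr_pow. destruct excluded_middle_informative; lra.
Qed.

Lemma restr_pow_nonneg s i : 0 <= restr_pow p D s i.
Proof. unfold restr_pow. destruct excluded_middle_informative; [left; apply Rpower_pos|lra]. Qed.

Lemma Fset_lsum_le1 d N : infinite_sum (restr_pow p D d) 1 ->
  lsum (fun i => Rpower (p i) d) (Fset N) <= 1.
Proof.
  intros H. destruct N as [|N]; [simpl; lra|].
  rewrite Fset_lsum. apply (sum_incr _ N 1 H), restr_pow_nonneg.
Qed.

Definition img (i : nat) (A : R -> Prop) : R -> Prop :=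
  fun x => exists y, A y /\ x = Tmap p i y.

(** The level-L cover of E = pi_p(D^N) with cut-off N: the part of E beyond
    phat_N (bound 1 - phat_N), together with the images under T_i, i in D,
    i < N, of the level-(L-1) cover; each set comes with a diameter bound. *)
Fixpoint level_cover (N : nat) (L : nat) : list ((R -> Prop) * R) :=
  match L with
  | O => [(pi_image p D, 1)]
  | S L' => (fun x => pi_image p D x /\ phat p N <= x, 1 - phat p N) ::
      flat_map (fun i => map (fun ab => (img i (fst ab), p i * snd ab)) (level_cover N L'))
               (Fset N)
  end.

Lemma level_cover_covers N L x : pi_image p D x -> exists ab, In ab (level_cover N L) /\ fst ab x.
Proof.
  revert x; induction L as [|L IH]; intros x Hx; simpl; [exists (pi_image p D, 1); auto|].
  destruct Hx as [w [Hw Hpi]]. destruct (pi_decomp p p_range p_sum w x Hpi) as [y [Hy Hxy]].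
  destruct (Nat.lt_ge_cases (w 0%nat) N) as [Hlt|Hge].
  - destruct (IH y) as [ab [Hin Hab]]; [exists (fun k => w (S k)); auto|].
    exists (img (w 0%nat) (fst ab), p (w 0%nat) * snd ab). split; [right|exists y; auto].
    apply in_flat_map. exists (w 0%nat). split; [apply Fset_In; auto|].
    apply in_map_iff. exists ab; auto.
  - eexists. split; [left; reflexivity|]. split; [exists w; auto|]. simpl.
    pose proof (pi_range1 p p_range p_sum _ y Hy). pose proof (p_range (w 0%nat)).
    pose proof (phat_mono p p_range N (w 0%nat) Hge). rewrite Hxy. unfold Tmap. nra.
Qed.

Lemma level_cover_pos N L ab : In ab (level_cover N L) -> 0 < snd ab.
Proof.
  revert ab; induction L as [|L IH]; intros ab Hin; simpl in Hin.
  - destruct Hin as [<-|[]]. simpl; lra.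
  - destruct Hin as [<-|Hin]; [simpl; pose proof (phat_lt1 p p_range p_sum N); lra|].
    apply in_flat_map in Hin. destruct Hin as [i [_ Hin]]. apply in_map_iff in Hin.
    destruct Hin as [ab' [<- Hin]]. simpl. pose proof (p_range i). specialize (IH ab' Hin). nra.
Qed.

Lemma level_cover_diam N L ab : In ab (level_cover N L) ->
  forall x y, fst ab x -> fst ab y -> Rabs (x - y) <= snd ab.
Proof.
  assert (Hin01 : forall x, pi_image p D x -> 0 <= x < 1)
    by (intros x [w [_ Hx]]; exact (pi_range1 p p_range p_sum w x Hx)).
  revert ab; induction L as [|L IH]; intros ab Hin; simpl in Hin.
  - destruct Hin as [<-|[]]. intros x y Hx Hy. apply Hin01 in Hx, Hy. apply Rabs_le. simpl; lra.
  - destruct Hin as [<-|Hin].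
    + intros x y [Hx hx] [Hy hy]. apply Hin01 in Hx, Hy. apply Rabs_le. simpl; lra.
    + apply in_flat_map in Hin. destruct Hin as [i [_ Hin]]. apply in_map_iff in Hin.
      destruct Hin as [ab' [<- Hin]]. intros x y [x' [Hx ->]] [y' [Hy ->]]. simpl.
      rewrite Tmap_dist by exact p_range. pose proof (p_range i).
      specialize (IH ab' Hin x' y' Hx Hy). nra.
Qed.

Lemma level_cover_small N L lam ab : 0 < lam < 1 -> (forall i, p i <= lam) ->
  In ab (level_cover N L) -> snd ab <= Rmax (1 - phat p N) (lam ^ L).
Proof.
  intros Hl Hpl. revert ab; induction L as [|L IH]; intros ab Hin; simpl in Hin.
  - destruct Hin as [<-|[]]. apply Rmax_r.
  - destruct Hin as [<-|Hin]; [apply Rmax_l|].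
    apply in_flat_map in Hin. destruct Hin as [i [_ Hin]]. apply in_map_iff in Hin.
    destruct Hin as [ab' [<- Hin]]. simpl.
    pose proof (IH ab' Hin). pose proof (level_cover_pos N L ab' Hin).
    pose proof (p_range i). pose proof (Hpl i). pose proof (phat_lt1 p p_range p_sum N).
    assert (p i * snd ab' <= lam * Rmax (1 - phat p N) (lam ^ L)) by nra.
    unfold Rmax in *. destruct (Rle_dec (1 - phat p N) (lam ^ L)); destruct Rle_dec; nra.
Qed.

Lemma level_cover_cost_step N L s :
  lsum (fun ab => Rpower (snd ab) s) (level_cover N (S L)) =
  Rpower (1 - phat p N) s + lsum (fun i => Rpower (p i) s) (Fset N) *
     lsum (fun ab => Rpower (snd ab) s) (level_cover N L).
Proof.
  simpl. f_equal. rewrite lsum_flat_map, Rmult_comm, <- lsum_scal. apply lsum_ext.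
  intros i _. rewrite lsum_map, Rmult_comm, <- lsum_scal. apply lsum_ext.
  intros ab Hab. simpl. rewrite Rpower_mult_distr; [reflexivity|apply p_range|].
  exact (level_cover_pos N L ab Hab).
Qed.

Lemma level_cover_cost N s sig : 0 <= sig < 1 ->
  lsum (fun i => Rpower (p i) s) (Fset N) <= sig ->
  forall L, lsum (fun ab => Rpower (snd ab) s) (level_cover N L) <=
     Rpower (1 - phat p N) s / (1 - sig) + sig ^ L.
Proof.
  intros Hsig HF. set (T := Rpower (1 - phat p N) s). pose proof (Rpower_pos (1 - phat p N) s).
  assert (HT : T / (1 - sig) = T + sig * (T / (1 - sig))) by (field; lra).
  assert (0 <= T / (1 - sig)) by (unfold Rdiv; apply Rmult_le_pos; [unfold T; lra|left; apply Rinv_0_lt_compat; lra]).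
  induction L as [|L IH].
  - simpl. unfold Rpower at 1. rewrite ln_1, Rmult_0_r, exp_0. lra.
  - rewrite level_cover_cost_step. fold T.
    set (C := lsum _ (level_cover N L)) in *. set (F := lsum _ (Fset N)) in *.
    assert (0 <= C) by (apply lsum_nonneg; intros; left; apply Rpower_pos).
    assert (0 <= F) by (apply lsum_nonneg; intros; left; apply Rpower_pos).
    assert (F * C <= sig * (T / (1 - sig) + sig ^ L)) by nra.
    simpl. lra.
Qed.

(** Choosing N with 1 - phat_N small and then L large gives covers of
    arbitrarily small mesh and s-cost as soon as s > d. *)
Lemma upper_null d s : infinite_sum (restr_pow p D d) 1 -> 0 <= d -> d < s ->
  hausdorff_null s (pi_image p D).
Proof.
  intros hdsum hd hds delta eps Hdel Heps.
  destruct (p_uniform_bound p p_range p_sum) as [lam [Hl Hpl]].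
  set (sig := Rpower lam (s - d)).
  assert (Hsig : 0 < sig < 1).
  { split; [apply Rpower_pos|]. pose proof (Rpower_lt_exp lam 0 (s - d) Hl ltac:(lra)).
    rewrite Rpower_O in *; unfold sig; lra. }
  assert (HF : forall N, lsum (fun i => Rpower (p i) s) (Fset N) <= sig).
  { intros N. apply Rle_trans with (sig * lsum (fun i => Rpower (p i) d) (Fset N)).
    - rewrite <- lsum_scal. apply lsum_le. intros i _.
      replace s with (d + (s - d)) at 1 by ring. rewrite Rpower_plus, Rmult_comm.
      apply Rmult_le_compat_r; [left; apply Rpower_pos|].
      apply Rle_Rpower_l; [lra|split; [apply p_range|apply Hpl]].
    - pose proof (Fset_lsum_le1 d N hdsum). nra. }
  set (c := eps * (1 - sig) / 2).
  assert (Hc : 0 < c) by (unfold c; apply Rmult_lt_0_compat; [nra|lra]).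
  destruct (phat_to1 p p_sum (Rmin delta (Rpower c (1 / s)))) as [N HN].
  { apply Rmin_glb_lt; auto. apply Rpower_pos. }
  pose proof (Rmin_l delta (Rpower c (1/s))). pose proof (Rmin_r delta (Rpower c (1/s))).
  pose proof (phat_lt1 p p_range p_sum N).
  assert (HT : Rpower (1 - phat p N) s <= c).
  { replace c with (Rpower (Rpower c (1 / s)) s).
    - apply Rle_Rpower_l; lra.
    - rewrite Rpower_mult. replace (1 / s * s) with 1 by (field; lra). apply Rpower_1; auto. }
  destruct (pow_lt_1_zero lam ltac:(rewrite Rabs_right; lra) delta Hdel) as [L1 HL1].
  destruct (pow_lt_1_zero sig ltac:(rewrite Rabs_right; lra) (eps / 2) ltac:(lra)) as [L2 HL2].
  set (L := max L1 L2).
  specialize (HL1 L (Nat.le_max_l _ _)). specialize (HL2 L (Nat.le_max_r _ _)).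
  rewrite Rabs_right in HL1, HL2 by (left; apply pow_lt; lra).
  apply (finite_family_cover _ (level_cover N L)); [lra|apply level_cover_covers| |].
  - intros ab Hin. split; [split|].
    + exact (level_cover_pos N L ab Hin).
    + eapply Rle_trans; [exact (level_cover_small N L lam ab Hl Hpl Hin)|]. apply Rmax_lub; lra.
    + exact (level_cover_diam N L ab Hin).
  - eapply Rle_trans; [apply (level_cover_cost N s sig); auto; lra|].
    assert (Rpower (1 - phat p N) s / (1 - sig) <= c / (1 - sig))
      by (apply Rmult_le_compat_r; [left; apply Rinv_0_lt_compat|]; lra).
    assert (c / (1 - sig) = eps / 2) by (unfold c; field; lra). lra.
Qed.

End UpperBound.

(** * Lower bound, part 1: mass counting on finite interval covers *)

(** The pair j = (a, l) stands for the closed interval [a, a + l]. *)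
Definition interval_cover (E : R -> Prop) (J : list (R * R)) : Prop :=
  forall x, E x -> exists j, In j J /\ fst j <= x <= fst j + snd j.

Definition meets (E : R -> Prop) (p : nat -> R) (m : nat) (j : R * R) : Prop :=
  exists y, E y /\ fst j <= Tmap p m y <= fst j + snd j.

(** The preimage of the interval j under T_m. *)
Definition resc (p : nat -> R) (m : nat) (j : R * R) : R * R :=
  ((fst j - phat p m) / p m, snd j / p m).

Section MassCounting.
Variable E : R -> Prop.
Variable p : nat -> R.
Variable ms : list nat.
Variables s g lam : R.
Hypothesis s_pos : 0 < s.
Hypothesis g_pos : 0 < g.
Hypothesis lam_range : 0 < lam < 1.
Hypothesis ms_ratio : forall m, In m ms -> 0 < p m <= lam.
Hypothesis ms_nodup : NoDup ms.
Hypothesis ms_mass : 1 <= lsum (fun m => Rpower (p m) s) ms.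
Hypothesis E_nonempty : exists x, E x.
Hypothesis E_invariant : forall m y, In m ms -> E y -> E (Tmap p m y).
Hypothesis E_separated : forall m m' y y', In m ms -> In m' ms -> E y -> E y' ->
  Rabs (Tmap p m y - Tmap p m' y') < g -> m = m'.

Let meeting (m : nat) (J : list (R * R)) := filter (fun j => dec (meets E p m j)) J.

Lemma rescaled_cover m J : In m ms -> interval_cover E J ->
  interval_cover E (map (resc p m) (meeting m J)).
Proof.
  intros Hm Hc x Hx. destruct (ms_ratio m Hm) as [Hp _].
  destruct (Hc (Tmap p m x) (E_invariant m x Hm Hx)) as [j [Hj Hjc]].
  exists (resc p m j). split.
  - apply in_map, filter_In. split; [exact Hj|]. apply dec_true. exists x; auto.
  - unfold resc, Tmap in *; simpl in *. split.
    + apply (Rmult_le_reg_r (p m)); auto. unfold Rdiv. rewrite Rmult_assoc, Rinv_l by lra. lra.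
    + apply (Rmult_le_reg_r (p m)); auto. unfold Rdiv.
      rewrite Rmult_plus_distr_r, !Rmult_assoc, Rinv_l by lra. lra.
Qed.

Lemma rescaled_cost m J : In m ms -> (forall j, In j J -> 0 < snd j) ->
  Rpower (p m) s * lsum (fun j => Rpower (snd j) s) (map (resc p m) (meeting m J)) =
  lsum (fun j => ind (meets E p m j) * Rpower (snd j) s) J.
Proof.
  intros Hm Hpos. destruct (ms_ratio m Hm) as [Hp _].
  unfold meeting. rewrite lsum_map, lsum_filter, <- lsum_scal. apply lsum_ext.
  intros j Hj. simpl. rewrite <- Rmult_assoc, (Rmult_comm (Rpower (p m) s)), Rmult_assoc.
  rewrite Rpower_mult_distr by (try apply Rdiv_lt_0_compat; auto).
  replace (p m * (snd j / p m)) with (snd j) by (field; lra). reflexivity.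
Qed.

Lemma meets_at_most_once j : snd j < g -> lsum (fun m => ind (meets E p m j)) ms <= 1.
Proof.
  intros Hj. apply count_unique_le1; [exact ms_nodup|].
  intros m m' Hm Hm' [y [Hy Hy1]] [y' [Hy' Hy'1]].
  apply (E_separated m m' y y'); auto. apply Rabs_def1; lra.
Qed.

(** Induction on k: either some interval is already longer than g, or all
    intervals are short; then each one meets at most one T_m(E), and the
    pulled-back covers of E (lengths >= g lam^(k-1)) give
    g^s * sum_m p_m^s <= cost, while sum_m p_m^s >= 1. *)
Lemma mass_lower_bound k J : (forall j, In j J -> g * lam ^ k <= snd j) ->
  interval_cover E J -> Rpower g s <= lsum (fun j => Rpower (snd j) s) J.
Proof.
  assert (Hnn : forall (J : list (R * R)) j, In j J -> 0 <= Rpower (snd j) s)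
    by (intros; left; apply Rpower_pos).
  revert J; induction k as [|k IH]; intros J Hr Hc.
  { destruct E_nonempty as [x0 Hx0]. destruct (Hc x0 Hx0) as [j [Hj _]].
    eapply Rle_trans; [|apply (lsum_In_le _ J j (Hnn J) Hj)].
    apply Rle_Rpower_l; [lra|]. specialize (Hr j Hj). simpl in Hr. lra. }
  destruct (classic (exists j, In j J /\ g <= snd j)) as [[j [Hj Hjg]]|Hno].
  { eapply Rle_trans; [|apply (lsum_In_le _ J j (Hnn J) Hj)]. apply Rle_Rpower_l; lra. }
  assert (Hshort : forall j, In j J -> snd j < g).
  { intros j Hj. destruct (Rlt_le_dec (snd j) g); auto. exfalso; eauto. }
  assert (Hpos : forall j, In j J -> 0 < snd j).
  { intros j Hj. specialize (Hr j Hj). pose proof (pow_lt lam (S k) (proj1 lam_range)). nra. }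
  assert (Hm : forall m, In m ms ->
    Rpower g s * Rpower (p m) s <= lsum (fun j => ind (meets E p m j) * Rpower (snd j) s) J).
  { intros m Hmin. rewrite <- (rescaled_cost m J Hmin Hpos), Rmult_comm.
    apply Rmult_le_compat_l; [left; apply Rpower_pos|].
    apply IH; [|apply rescaled_cover; auto].
    intros j' Hj'. apply in_map_iff in Hj'. destruct Hj' as [j [<- Hj]].
    apply filter_In in Hj. destruct Hj as [Hj _]. specialize (Hr j Hj).
    destruct (ms_ratio m Hmin) as [Hp1 Hp2]. simpl in Hr |- *.
    apply (Rmult_le_reg_r (p m)); auto. unfold Rdiv.
    rewrite (Rmult_assoc (snd j)), Rinv_l, Rmult_1_r by lra.
    pose proof (pow_lt lam k (proj1 lam_range)).
    assert (g * lam ^ k * p m <= g * lam ^ k * lam) by (apply Rmult_le_compat_l; nra). nra. }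
  assert (Htot : Rpower g s * lsum (fun m => Rpower (p m) s) ms <=
                 lsum (fun j => Rpower (snd j) s * lsum (fun m => ind (meets E p m j)) ms) J).
  { rewrite <- lsum_scal.
    rewrite (lsum_ext (fun j => _ * _) (fun j => lsum (fun m => ind (meets E p m j) * Rpower (snd j) s) ms))
      by (intros j _; rewrite <- lsum_scal; apply lsum_ext; intros; ring).
    rewrite <- lsum_exchange. apply lsum_le. auto. }
  assert (Hcnt : lsum (fun j => Rpower (snd j) s * lsum (fun m => ind (meets E p m j)) ms) J
                 <= lsum (fun j => Rpower (snd j) s) J).
  { apply lsum_le. intros j Hj. pose proof (Rpower_pos (snd j) s).
    pose proof (meets_at_most_once j (Hshort j Hj)). nra. }
  pose proof (Rpower_pos g s). nra.
Qed.

End MassCounting.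

(** * Lower bound, part 2: compactness of pi_p(M^N) for a finite alphabet M *)

Lemma fin_max {A} (ms : list A) (Q : A -> nat -> Prop) :
  (forall m N N', Q m N -> (N <= N')%nat -> Q m N') ->
  (forall m, In m ms -> exists N, Q m N) -> exists N, forall m, In m ms -> Q m N.
Proof.
  intros Hmono. induction ms as [|a ms IH]; intros H; [exists 0%nat; intros m []|].
  destruct IH as [N1 HN1]; [intros; apply H; simpl; auto|].
  destruct (H a (or_introl eq_refl)) as [N2 HN2].
  exists (max N1 N2). intros m [<-|Hm]; eapply Hmono; eauto; lia.
Qed.

Definition upd (v : nat -> nat) (k m : nat) : nat -> nat :=
  fun i => if Nat.eqb i k then m else v i.

Section Compactness.
Variable p : nat -> R.
Hypothesis p_range : forall i, 0 < p i < 1.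
Hypothesis p_sum : infinite_sum p 1.
Variable ms : list nat.
Variable lam : R.
Hypothesis lam_range : 0 < lam < 1.
Hypothesis ms_ratio : forall m, In m ms -> p m <= lam.
Hypothesis ms_nonempty : ms <> [].
Variables (ctr rad : nat -> R).

Definition finitely_covered (v : nat -> nat) (k : nat) : Prop :=
  exists N, forall w x, (forall i, In (w i) ms) -> (forall i, (i < k)%nat -> w i = v i) ->
    is_pi p w x -> exists n, (n < N)%nat /\ Rabs (x - ctr n) < rad n.

(** If a prefix is not finitely covered, neither is one of its one-letter
    extensions (finitely many extensions, finitely many intervals each). *)
Lemma covering_step v k : exists m, In m ms /\
  (~ finitely_covered v k -> ~ finitely_covered (upd v k m) (S k)).
Proof.
  destruct (classic (finitely_covered v k)) as [Hg|Hg].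
  { destruct ms as [|m0 ms']; [congruence|]. exists m0. split; simpl; auto. }
  apply NNPP. intros Hc. apply Hg.
  assert (Hall : forall m, In m ms -> finitely_covered (upd v k m) (S k)).
  { intros m Hm. apply NNPP. intros Hb. apply Hc. exists m. auto. }
  destruct (fin_max ms (fun m N => forall w x, (forall i, In (w i) ms) ->
      (forall i, (i < S k)%nat -> w i = upd v k m i) -> is_pi p w x ->
      exists n, (n < N)%nat /\ Rabs (x - ctr n) < rad n)) as [N HN]; [|exact Hall|].
  { intros m N N' H HN w x H1 H2 H3. destruct (H w x H1 H2 H3) as [n [Hn Hn']].
    exists n; split; auto; lia. }
  exists N. intros w x Hw Hag Hx. apply (HN (w k) (Hw k) w x Hw); auto.
  intros i Hi. unfold upd. destruct (Nat.eqb_spec i k); [subst; auto|]. apply Hag; lia.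
Qed.

(** Otherwise the steps
    above build a word all of whose prefixes are not finitely covered,
    contradicting that its code lies in an open interval, which contains
    the codes of all words sharing a long enough prefix. *)
Lemma finite_subcover :
  (forall w x, (forall i, In (w i) ms) -> is_pi p w x -> exists n, Rabs (x - ctr n) < rad n) ->
  exists N, forall w x, (forall i, In (w i) ms) -> is_pi p w x ->
    exists n, (n < N)%nat /\ Rabs (x - ctr n) < rad n.
Proof.
  intros Hcov.
  set (f := fun v k => proj1_sig (constructive_indefinite_description _ (covering_step v k))).
  assert (Hf : forall v k, In (f v k) ms /\
     (~ finitely_covered v k -> ~ finitely_covered (upd v k (f v k)) (S k)))
    by (intros v k; unfold f; destruct constructive_indefinite_description; auto).
  apply NNPP. intros Hbad0.
  assert (Hbad : ~ finitely_covered (fun _ => 0%nat) 0%nat).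
  { intros [N HN]. apply Hbad0. exists N. intros w x Hw Hx. apply (HN w x Hw); auto. intros; lia. }
  set (path := fix path k := match k with
               | O => (fun _ => 0%nat) | S k' => upd (path k') k' (f (path k') k') end).
  assert (Hpb : forall k, ~ finitely_covered (path k) k) by (induction k; [exact Hbad|apply Hf; auto]).
  set (om := fun i => path (S i) i).
  assert (Hom : forall k i, (i < k)%nat -> path k i = om i).
  { induction k; intros i Hi; [lia|]. unfold om. simpl. unfold upd.
    destruct (Nat.eqb_spec i k); [subst; simpl; rewrite Nat.eqb_refl; reflexivity|].
    rewrite IHk by lia. reflexivity. }
  assert (Homs : forall i, In (om i) ms)
    by (intros i; unfold om; simpl; unfold upd; rewrite Nat.eqb_refl; apply Hf).
  destruct (pi_exists p p_range p_sum om) as [x0 Hx0].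
  destruct (Hcov om x0 Homs Hx0) as [n Hn].
  destruct (pow_lt_1_zero lam ltac:(rewrite Rabs_right; lra) (rad n - Rabs (x0 - ctr n)) ltac:(lra))
    as [k Hk].
  specialize (Hk k (le_n _)). rewrite Rabs_right in Hk by (left; apply pow_lt; lra).
  apply (Hpb k). exists (S n). intros w x Hw Hag Hx. exists n. split; [lia|].
  assert (Rabs (x - x0) <= lam ^ k).
  { apply (pi_close p p_range p_sum ms lam (proj1 lam_range) ms_ratio k w om x x0 Hw); auto.
    intros i Hi. rewrite Hag by auto. apply Hom; auto. }
  pose proof (Rabs_triang (x - x0) (x0 - ctr n)).
  replace (x - x0 + (x0 - ctr n)) with (x - ctr n) in * by ring. lra.
Qed.

End Compactness.

(** * Lower bound, part 3: H^s(pi_p(D^N)) > 0 for s < d *)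

Lemma enlarge_cover (E : R -> Prop) U r l s delta th : 0 < s -> 0 < th ->
  delta_cover delta E U r -> infinite_sum (cover_term s U r) l ->
  exists ctr rho : nat -> R, (forall n, 0 < rho n) /\
    (forall x, E x -> exists n, Rabs (x - ctr n) < 2 * rho n) /\
    forall N0, lsum (fun n => Rpower (rho n) s) (seq 0 N0) <= l + th.
Proof.
  intros Hs Hth [Hcov Hdiam] Hls.
  set (eta := fun n : nat => Rpower (th / 2 ^ (S n)) (1 / s)).
  assert (Heta_s : forall n, Rpower (eta n) s = th / 2 ^ (S n)).
  { intros n. unfold eta. rewrite Rpower_mult. replace (1 / s * s) with 1 by (field; lra).
    apply Rpower_1, Rdiv_lt_0_compat; [auto|apply pow_lt; lra]. }
  set (ctr := fun n => match excluded_middle_informative (exists x, U n x) with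
        | left h => proj1_sig (constructive_indefinite_description _ h) | right _ => 0 end).
  set (rho := fun n => match excluded_middle_informative (exists x, U n x) with
        | left _ => Rmax (r n) (eta n) | right _ => eta n end).
  assert (Hrho : forall n, 0 < rho n /\
      Rpower (rho n) s <= cover_term s U r n + th / 2 ^ (S n) /\
      forall x, U n x -> Rabs (x - ctr n) <= rho n).
  { intros n. pose proof (Rpower_pos (th / 2 ^ S n) (1 / s)).
    unfold rho, ctr, cover_term. destruct excluded_middle_informative as [h|h].
    - destruct (constructive_indefinite_description _ h) as [y0 Hy0]; cbn [proj1_sig].
      destruct (Hdiam n h) as [Hd _].
      assert (Hr0 : 0 <= r n).
      { apply Hd. exists y0, y0. rewrite Rminus_diag, Rabs_R0. auto. }
      split; [eapply Rlt_le_trans; [|apply Rmax_r]; auto|]. split.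
      + rewrite <- Heta_s. apply Rpower_max_le; auto.
      + intros x Hx. eapply Rle_trans; [|apply Rmax_l]. apply Hd. exists x, y0. auto.
    - split; [auto|]. split; [rewrite Heta_s; simpl; lra|]. intros x Hx. exfalso; eauto. }
  exists ctr, rho. split; [|split].
  - intros n. apply Hrho.
  - intros x Hx. destruct (Hcov x Hx) as [n Hn]. exists n.
    destruct (Hrho n) as [h1 [_ h3]]. specialize (h3 x Hn). lra.
  - intros N0. eapply Rle_trans; [apply lsum_le; intros n _; apply (Hrho n)|].
    rewrite lsum_plus.
    rewrite (lsum_ext (fun n => th / 2 ^ S n) (fun n => th * / 2 ^ (S n))) by reflexivity.
    rewrite lsum_scal, lsum_geom_half.
    assert (0 < / 2 ^ N0) by (apply Rinv_0_lt_compat, pow_lt; lra).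
    assert (lsum (cover_term s U r) (seq 0 N0) <= l).
    { destruct N0 as [|N0].
      - pose proof (sum_incr _ 0 l Hls (cover_term_nonneg s U r)). simpl in *.
        pose proof (cover_term_nonneg s U r 0). lra.
      - rewrite lsum_seq. apply (sum_incr _ N0 l Hls (cover_term_nonneg s U r)). }
    nra.
Qed.

Section LowerBound.
Variable p : nat -> R.
Variable D : nat -> Prop.
Hypothesis p_range : forall i, 0 < p i < 1.
Hypothesis p_sum : infinite_sum p 1.

Lemma choose_alphabet s d : (exists i, D i) -> s < d -> infinite_sum (restr_pow p D d) 1 ->
  exists N i0, D i0 /\ (i0 <= N)%nat /\ 1 <= sum_f_R0 (restr_pow p D s) N.
Proof.
  intros [i0 Hi0] Hsd hdsum.
  assert (Hle : forall i, restr_pow p D d i <= restr_pow p D s i).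
  { intros i. unfold restr_pow. destruct excluded_middle_informative; [|lra].
    left; apply Rpower_lt_exp; auto. }
  set (gam := Rpower (p i0) s - Rpower (p i0) d).
  assert (Hg : 0 < gam) by (pose proof (Rpower_lt_exp (p i0) s d (p_range i0) Hsd); unfold gam; lra).
  destruct (hdsum gam Hg) as [N1 HN1]. exists (max N1 i0), i0. split; [auto|]. split; [lia|].
  specialize (HN1 (max N1 i0) (Nat.le_max_l _ _)). unfold Rdist in HN1. apply Rabs_def2 in HN1.
  assert (gam <= sum_f_R0 (fun k => restr_pow p D s k - restr_pow p D d k) (max N1 i0)).
  { replace gam with (restr_pow p D s i0 - restr_pow p D d i0).
    - apply (sum_f_R0_ge_term (fun k => restr_pow p D s k - restr_pow p D d k)); [|lia].
      intros k. specialize (Hle k). lra.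
    - unfold restr_pow, gam. destruct excluded_middle_informative; tauto. }
  rewrite minus_sum in *. lra.
Qed.

Lemma Tmap_gap m m' y y' B : (m < m')%nat -> 0 <= y <= B -> 0 <= y' ->
  p m * (1 - B) <= Tmap p m' y' - Tmap p m y.
Proof.
  intros Hlt Hy Hy'. pose proof (phat_mono p p_range (S m) m' Hlt). simpl in *.
  pose proof (p_range m). pose proof (p_range m'). unfold Tmap. nra.
Qed.

Lemma alphabet_separated N : exists g, 0 < g /\
  forall m m' y y', In m (Fset D (S N)) -> In m' (Fset D (S N)) ->
    pi_image p (fun i => In i (Fset D (S N))) y -> pi_image p (fun i => In i (Fset D (S N))) y' ->
    Rabs (Tmap p m y - Tmap p m' y') < g -> m = m'.
Proof.
  set (ms := Fset D (S N)). set (B := phat p (S N)).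
  assert (HB : B < 1) by apply (phat_lt1 p p_range p_sum).
  destruct (fin_min_pos ms p) as [pm [Hpm Hpm']]; [intros; apply p_range|].
  assert (HEr : forall y, pi_image p (fun i => In i ms) y -> 0 <= y <= B).
  { intros y [w [Hw Hy]]. pose proof (pi_range p p_range p_sum w y Hy).
    destruct (proj1 (Fset_In D (S N) (w 0%nat)) (Hw 0%nat)) as [_ Hw0].
    pose proof (phat_mono p p_range (S (w 0%nat)) (S N) ltac:(lia)). unfold B. lra. }
  exists (pm * (1 - B)). split; [apply Rmult_lt_0_compat; lra|].
  intros m m' y y' Hm Hm' Hy Hy' Hd. apply HEr in Hy, Hy'. apply Rabs_def2 in Hd.
  assert (pm * (1 - B) <= p m * (1 - B)) by (apply Rmult_le_compat_r; [lra|auto]).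
  assert (pm * (1 - B) <= p m' * (1 - B)) by (apply Rmult_le_compat_r; [lra|auto]).
  destruct (Nat.lt_trichotomy m m') as [Hlt|[Heq|Hlt]]; auto; exfalso.
  - pose proof (Tmap_gap m m' y y' B Hlt Hy (proj1 Hy')). lra.
  - pose proof (Tmap_gap m' m y' y B Hlt Hy' (proj1 Hy)). lra.
Qed.

Lemma alphabet_mass_bound s N i0 g lam : 0 < s -> 0 < g -> 0 < lam < 1 ->
  (forall i, p i <= lam) -> In i0 (Fset D (S N)) ->
  1 <= sum_f_R0 (restr_pow p D s) N ->
  (forall m m' y y', In m (Fset D (S N)) -> In m' (Fset D (S N)) ->
    pi_image p (fun i => In i (Fset D (S N))) y -> pi_image p (fun i => In i (Fset D (S N))) y' ->
    Rabs (Tmap p m y - Tmap p m' y') < g -> m = m') ->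
  forall k J, (forall j, In j J -> g * lam ^ k <= snd j) ->
    interval_cover (pi_image p (fun i => In i (Fset D (S N)))) J ->
    Rpower g s <= lsum (fun j => Rpower (snd j) s) J.
Proof.
  intros Hs Hg Hl Hpl Hi0 Hsum Hsep.
  apply (mass_lower_bound _ p (Fset D (S N)) s g lam); auto.
  - intros m _. split; [apply p_range|apply Hpl].
  - apply NoDup_filter, seq_NoDup.
  - rewrite Fset_lsum. exact Hsum.
  - destruct (pi_exists p p_range p_sum (fun _ => i0)) as [x Hx]. exists x, (fun _ => i0). auto.
  - intros m y Hm [w [Hw Hy]]. exists (cons_seq m w). split; [intros [|k]; simpl; auto|].
    apply pi_cons; auto.
Qed.

(** The set E_M = pi_p(M^N) for a finite alphabet M in D with s-mass >= 1 is
    compact, separated and invariant, so every cover of it has s-cost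
    >= g^s by the mass counting bound; hence H^s(pi_p(D^N)) cannot vanish. *)
Lemma lower_pos d s : (exists i, D i) -> infinite_sum (restr_pow p D d) 1 ->
  0 < s -> s < d -> ~ hausdorff_null s (pi_image p D).
Proof.
  intros hD hdsum Hs Hsd Hnull.
  destruct (choose_alphabet s d hD Hsd hdsum) as [N [i0 [Hi0 [Hi0N HsumN]]]].
  set (ms := Fset D (S N)).
  assert (Hi0ms : In i0 ms) by (apply Fset_In; split; auto; lia).
  destruct (p_uniform_bound p p_range p_sum) as [lam [Hl Hpl]].
  destruct (alphabet_separated N) as [g [Hg Hsep]].
  pose proof (alphabet_mass_bound s N i0 g lam Hs Hg Hl Hpl Hi0ms HsumN Hsep) as Hmass.
  (* A cover of E of cost l <= th gives finitely many intervals of lengths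
     4 rho_n covering E_M, of total s-cost <= 4^s (l + th) <= g^s / 2. *)
  set (th := Rpower g s / (4 * Rpower 4 s)).
  assert (Hth : 0 < th).
  { unfold th. apply Rdiv_lt_0_compat; [apply Rpower_pos|]. pose proof (Rpower_pos 4 s); lra. }
  destruct (Hnull 1 th ltac:(lra) Hth) as [U [r [l [Hcov [Hls Hlle]]]]].
  destruct (enlarge_cover _ U r l s 1 th Hs Hth Hcov Hls) as [ctr [rho [Hrho [Hball Hcost]]]].
  destruct (finite_subcover p p_range p_sum ms lam Hl ltac:(intros; apply Hpl)
     ltac:(intros Hc; rewrite Hc in Hi0ms; contradiction) ctr (fun n => 2 * rho n)) as [N0 HN0].
  { intros w x Hw Hx. apply Hball. exists w. split; auto. intros k. apply (Fset_In D (S N)), Hw. }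
  set (J := map (fun n => (ctr n - 2 * rho n, 4 * rho n)) (seq 0 N0)).
  (* all these lengths exceed g lam^k for k large *)
  destruct (fin_min_pos (seq 0 N0) (fun n => 4 * rho n)) as [c [Hc Hc']].
  { intros n _. specialize (Hrho n); lra. }
  destruct (pow_lt_1_zero lam ltac:(rewrite Rabs_right; lra) (c / g)
              ltac:(apply Rdiv_lt_0_compat; auto)) as [k Hk].
  specialize (Hk k (le_n _)). rewrite Rabs_right in Hk by (left; apply pow_lt; lra).
  assert (HJ : Rpower g s <= lsum (fun j => Rpower (snd j) s) J).
  { apply (Hmass k).
    - intros j Hj. apply in_map_iff in Hj. destruct Hj as [n [<- Hn]]. simpl.
      specialize (Hc' n Hn). apply (Rmult_lt_compat_l g) in Hk; auto.
      replace (g * (c / g)) with c in Hk by (field; lra). lra.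
    - intros x [w [Hw Hx]]. destruct (HN0 w x Hw Hx) as [n [Hn Hxn]].
      exists (ctr n - 2 * rho n, 4 * rho n). split.
      + apply (in_map (fun n => (ctr n - 2 * rho n, 4 * rho n))). apply in_seq. lia.
      + simpl. apply Rabs_def2 in Hxn. lra. }
  unfold J in HJ. rewrite lsum_map in HJ. simpl in HJ.
  rewrite (lsum_ext _ (fun n => Rpower 4 s * Rpower (rho n) s)), lsum_scal in HJ.
  2:{ intros n _. rewrite Rpower_mult_distr; [reflexivity|lra|apply Hrho]. }
  specialize (Hcost N0).
  assert (Hth2 : Rpower 4 s * (2 * th) = Rpower g s / 2).
  { unfold th. field. pose proof (Rpower_pos 4 s). lra. }
  pose proof (Rpower_pos 4 s). pose proof (Rpower_pos g s). nra.
Qed.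

(** H^0 of a nonempty set is not 0: a set of the cover contains a point and
    costs 1. *)
Lemma lower_zero : (exists i, D i) -> ~ hausdorff_null 0 (pi_image p D).
Proof.
  intros [i0 Hi0] Hnull.
  destruct (Hnull 1 (1/2) ltac:(lra) ltac:(lra)) as [U [r [l [[Hcov Hdiam] [Hls Hlle]]]]].
  destruct (pi_exists p p_range p_sum (fun _ => i0)) as [x0 Hx0].
  destruct (Hcov x0) as [n Hn]; [exists (fun _ => i0); auto|].
  assert (Hn1 : cover_term 0 U r n = 1).
  { unfold cover_term. destruct excluded_middle_informative as [h|h]; [|exfalso; eauto].
    destruct (Hdiam n h) as [Hd _].
    assert (0 <= r n) by (apply Hd; exists x0, x0; rewrite Rminus_diag, Rabs_R0; auto).
    unfold rpow. destruct Req_EM_T; [destruct Req_EM_T; lra|]. apply Rpower_O. lra. }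
  pose proof (sum_incr _ n l Hls (cover_term_nonneg 0 U r)).
  pose proof (sum_f_R0_ge_term (cover_term 0 U r) n n (cover_term_nonneg 0 U r) (le_n _)). lra.
Qed.

End LowerBound.

Theorem theorem1 (p : nat -> R) (D : nat -> Prop) (d : R)
  (hp : forall i, 0 < p i < 1)
  (hsum : infinite_sum p 1)
  (hD : exists i, D i)
  (hd : 0 <= d)
  (hdsum : infinite_sum (restr_pow p D d) 1) :
  hausdorff_dim_is (pi_image p D) d.
Proof.
  split.
  -
    intros s Hs Hnull. destruct (Rle_dec d s) as [h|h]; auto. exfalso.
    destruct (Req_dec s 0) as [->|Hs0].
    + exact (lower_zero p D hp hsum hD Hnull).
    + apply (lower_pos p D hp hsum d s); auto; lra.
  -
    intros b Hb. destruct (Rle_dec b d) as [h|h]; auto. exfalso.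
    assert (b <= (b + d) / 2) by (apply Hb; [lra|apply (upper_null p D hp hsum d); auto; lra]).
    lra.
Qed.
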